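(* Let $k$ be a field, $V$ an infinite-dimensional $k$-vector space, $E=\mathrm{End}_k(V)$, $S\subseteq E$ the two-sided ideal of endomorphisms of finite rank, and $R=k+S\subseteq E$ (where $k$ is identified with scalar multiples of the identity). Then the only two-sided ideals of $R$ are $0$, $S$ and $R$; $R$ is a prime ring which is both right and left almost perfect; the Jacobson radical $J(R)$ is $0$; and $R$ is not semilocal, hence is neither right perfect nor left perfect.
   Context: Rings are associative with identity. A ring $R$ is right (resp. left) almost perfect if $R/I$ is a right (resp. left) perfect ring for every two-sided ideal $I$ of $R$ with $I\neq 0$, $I\neq R$. A ring is semilocal if $R/J(R)$ is semisimple artinian. *)

(* Ring-theoretic notions are stated for a ring given as a
   predicate [P] on the type [V -> V] of self-maps of a vector space, with
   pointwise addition and composition as multiplication.  Quotient rings P/I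
   are handled through the correspondence (literal for subsets of P/I) between
   subsets of P/I and I-saturated subsets of P: right ideals of P/I are right
   ideals of P containing I, and x = 0 in P/I means x \in I. *)
From HB Require Import structures.
From mathcomp Require Import all_boot all_order all_algebra.
Set Implicit Arguments. Unset Strict Implicit. Unset Printing Implicit Defensive.
Import GRing.Theory.
Local Open Scope ring_scope.

Definition eadd {V : zmodType} (f g : V -> V) : V -> V := fun v => f v + g v.
Definition eopp {V : zmodType} (f : V -> V) : V -> V := fun v => - f v.
Definition ezero {V : zmodType} : V -> V := fun _ => 0.
Definition emul {V : zmodType} (f g : V -> V) : V -> V := fun v => f (g v).
Definition eone {V : zmodType} : V -> V := fun v => v.
Definition escal {k : pzRingType} {V : lmodType k} (c : k) : V -> V :=
  fun v => c *: v.

Definition is_ideal {V : zmodType} (P I : (V -> V) -> Prop) : Prop :=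
  (forall x, I x -> P x) /\ I ezero /\
  (forall x y, I x -> I y -> I (eadd x y)) /\
  (forall x, I x -> I (eopp x)) /\
  (forall r x, P r -> I x -> I (emul r x)) /\
  (forall r x, P r -> I x -> I (emul x r)).

Definition zero_ideal {V : zmodType} : (V -> V) -> Prop := fun x => x = ezero.

(* right (resp. left) ideal of the quotient ring P/I, viewed as an
   I-saturated subset of P *)
Definition is_rideal_mod {V : zmodType} (P I A : (V -> V) -> Prop) : Prop :=
  [/\ (forall x, A x -> P x), (forall x, I x -> A x),
      (forall x y, A x -> A y -> A (eadd x y)),
      (forall x, A x -> A (eopp x)) &
      (forall a r, A a -> P r -> A (emul a r))].

Definition is_lideal_mod {V : zmodType} (P I A : (V -> V) -> Prop) : Prop :=
  [/\ (forall x, A x -> P x), (forall x, I x -> A x),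
      (forall x y, A x -> A y -> A (eadd x y)),
      (forall x, A x -> A (eopp x)) &
      (forall a r, A a -> P r -> A (emul r a))].

Definition maximal_rideal_mod {V : zmodType} (P I M : (V -> V) -> Prop) : Prop :=
  [/\ is_rideal_mod P I M, ~ M eone &
      forall N, is_rideal_mod P I N -> (forall x, M x -> N x) -> ~ N eone ->
        forall x, N x -> M x].

(* Jacobson radical of P/I: intersection of the maximal right ideals
   (as a subset of P, i.e. its preimage) *)
Definition Jac_mod {V : zmodType} (P I : (V -> V) -> Prop) : (V -> V) -> Prop :=
  fun x => P x /\ forall M, maximal_rideal_mod P I M -> M x.

Definition semisimple_mod {V : zmodType} (P K : (V -> V) -> Prop) : Prop :=
  forall A, is_rideal_mod P K A ->
    exists B, [/\ is_rideal_mod P K B,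
      (forall x, P x -> exists a b, [/\ A a, B b & x = eadd a b]) &
      (forall x, A x -> B x -> K x)].

Definition rartinian_mod {V : zmodType} (P K : (V -> V) -> Prop) : Prop :=
  forall A : nat -> (V -> V) -> Prop,
    (forall n, is_rideal_mod P K (A n)) ->
    (forall n x, A n.+1 x -> A n x) ->
    exists N, forall n, (N <= n)%N -> forall x, A N x -> A n x.

Definition semisimple_artinian_mod {V : zmodType} (P K : (V -> V) -> Prop) :=
  semisimple_mod P K /\ rartinian_mod P K.

Definition semilocal_mod {V : zmodType} (P I : (V -> V) -> Prop) : Prop :=
  semisimple_artinian_mod P (Jac_mod P I).

Fixpoint rprod {V : zmodType} (a : nat -> V -> V) (n : nat) : V -> V :=
  match n with 0 => a 0%N | m.+1 => emul (a m.+1) (rprod a m) end.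
Fixpoint lprod {V : zmodType} (a : nat -> V -> V) (n : nat) : V -> V :=
  match n with 0 => a 0%N | m.+1 => emul (lprod a m) (a m.+1) end.

(* T-nilpotence of a subset J of P/I (zero in P/I means membership in I) *)
Definition rTnilpotent_mod {V : zmodType} (I J : (V -> V) -> Prop) : Prop :=
  forall a : nat -> V -> V, (forall n, J (a n)) -> exists n, I (rprod a n).
Definition lTnilpotent_mod {V : zmodType} (I J : (V -> V) -> Prop) : Prop :=
  forall a : nat -> V -> V, (forall n, J (a n)) -> exists n, I (lprod a n).

(* (Lam) right perfect: semilocal with right T-nilpotent radical *)
Definition rperfect_mod {V : zmodType} (P I : (V -> V) -> Prop) : Prop :=
  semilocal_mod P I /\ rTnilpotent_mod I (Jac_mod P I).
Definition lperfect_mod {V : zmodType} (P I : (V -> V) -> Prop) : Prop :=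
  semilocal_mod P I /\ lTnilpotent_mod I (Jac_mod P I).

Definition Jac {V : zmodType} (P : (V -> V) -> Prop) := Jac_mod P zero_ideal.
Definition semilocal {V : zmodType} (P : (V -> V) -> Prop) :=
  semilocal_mod P zero_ideal.
Definition rperfect {V : zmodType} (P : (V -> V) -> Prop) :=
  rperfect_mod P zero_ideal.
Definition lperfect {V : zmodType} (P : (V -> V) -> Prop) :=
  lperfect_mod P zero_ideal.

Definition ralmost_perfect {V : zmodType} (P : (V -> V) -> Prop) : Prop :=
  forall I, is_ideal P I -> ~ (forall x, I x <-> x = ezero) ->
    ~ (forall x, P x -> I x) -> rperfect_mod P I.
Definition lalmost_perfect {V : zmodType} (P : (V -> V) -> Prop) : Prop :=
  forall I, is_ideal P I -> ~ (forall x, I x <-> x = ezero) ->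
    ~ (forall x, P x -> I x) -> lperfect_mod P I.

Definition prime_ring {V : zmodType} (P : (V -> V) -> Prop) : Prop :=
  eone <> ezero :> (V -> V) /\
  forall a b, P a -> P b -> (forall r, P r -> emul (emul a r) b = ezero) ->
    a = ezero \/ b = ezero.

Definition is_linear {k : pzRingType} {V : lmodType k} (f : V -> V) : Prop :=
  forall (a : k) (u v : V), f (a *: u + v) = a *: f u + f v.

Definition in_span {k : pzRingType} {V : lmodType k} (s : seq V) (v : V) : Prop :=
  exists c : 'I_(size s) -> k, v = \sum_(i < size s) c i *: nth 0 s i.

Definition infinite_dim {k : pzRingType} (V : lmodType k) : Prop :=
  forall s : seq V, exists v, ~ in_span s v.

Definition finite_rank {k : pzRingType} {V : lmodType k} (f : V -> V) : Prop :=
  exists s : seq V, forall v, in_span s (f v).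

Definition finrank_endo {k : pzRingType} (V : lmodType k) : (V -> V) -> Prop :=
  fun f => is_linear f /\ finite_rank f.
Arguments finrank_endo {k} V _.

Definition scalar_plus_finrank {k : pzRingType} (V : lmodType k)
  : (V -> V) -> Prop :=
  fun f => is_linear f /\
    exists c : k, finrank_endo V (eadd f (eopp (escal c))).
Arguments scalar_plus_finrank {k} V _.

(* The rank-one maps [v |-> psi v *: w] (psi a linear functional, which
   exists by Zorn's lemma) generate S additively, and any nonzero x in an
   ideal yields all of them as [rank_one phi w * x * rank_one psi v0] with
   [phi (x v0) = 1].  So a nonzero ideal contains S, and since R/S = k is a
   field it is S or R.  The quotient R/S being a field makes it trivially
   perfect, whence R is almost perfect.  For a functional psi with psi t = 1,
   the maps r with [psi \o r = 0] form a maximal right ideal; these meet in 0,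
   so J(R) = 0.  Were R semilocal it would then be semisimple, but a
   complement B of S gives 1 = a + b with a of finite rank and b in B, and
   for rank-one s the map b s = s - a s lies in S and in B, hence vanishes:
   a would fix every vector, impossible in infinite dimension. *)
From HB Require Import structures.
From mathcomp Require Import all_boot all_order all_algebra.
From mathcomp Require Import boolp classical_sets.
Set Implicit Arguments. Unset Strict Implicit. Unset Printing Implicit Defensive.
Import GRing.Theory.
Local Open Scope ring_scope.
Local Open Scope classical_set_scope.

Lemma is_rideal_mod_ideal (V : zmodType) (P I J : set (V -> V)) :
  is_ideal P J -> I `<=` J -> is_rideal_mod P I J.
Proof. by move=> [JP [_ [JD [JN [_ JMr]]]]] IJ; split=> // a r Ja Pr; apply: JMr. Qed.

Section LinearAlgebra.
Variables (k : pzRingType) (V : lmodType k).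
Implicit Types (f g : V -> V) (psi : V -> k) (s : seq V) (u v w x : V).

Lemma is_linearD f u v : is_linear f -> f (u + v) = f u + f v.
Proof. by move=> lf; have := lf 1 u v; rewrite !scale1r. Qed.

Lemma is_linear0 f : is_linear f -> f 0 = 0.
Proof. by move=> lf; apply: (addrI (f 0)); rewrite -is_linearD // !addr0. Qed.

Lemma is_linearZ f a u : is_linear f -> f (a *: u) = a *: f u.
Proof. by move=> lf; rewrite -[a *: u]addr0 lf is_linear0 // addr0. Qed.

Lemma is_linearN f u : is_linear f -> f (- u) = - f u.
Proof. by move=> lf; rewrite -scaleN1r is_linearZ // scaleN1r. Qed.

Lemma is_linearB f u v : is_linear f -> f (u - v) = f u - f v.
Proof. by move=> lf; rewrite is_linearD // is_linearN. Qed.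

Lemma is_linear_eadd f g : is_linear f -> is_linear g -> is_linear (eadd f g).
Proof. by move=> lf lg a u v; rewrite /eadd lf lg scalerDr addrACA. Qed.

Lemma is_linear_eopp f : is_linear f -> is_linear (eopp f).
Proof. by move=> lf a u v; rewrite /eopp lf opprD scalerN. Qed.

Lemma is_linear_emul f g : is_linear f -> is_linear g -> is_linear (emul f g).
Proof. by move=> lf lg a u v; rewrite /emul lg lf. Qed.

Definition linear_functional psi := forall a u v, psi (a *: u + v) = a * psi u + psi v.

Lemma linear_functionalD psi u v : linear_functional psi -> psi (u + v) = psi u + psi v.
Proof. by move=> lpsi; have := lpsi 1 u v; rewrite scale1r mul1r. Qed.

Lemma linear_functional0 psi : linear_functional psi -> psi 0 = 0.
Proof. by move=> lpsi; apply: (addrI (psi 0)); rewrite -linear_functionalD // !addr0. Qed.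

Lemma linear_functionalZ psi a u : linear_functional psi -> psi (a *: u) = a * psi u.
Proof. by move=> lpsi; rewrite -[a *: u]addr0 lpsi linear_functional0 // addr0. Qed.

Lemma linear_functionalN psi u : linear_functional psi -> psi (- u) = - psi u.
Proof. by move=> lpsi; rewrite -scaleN1r linear_functionalZ // mulN1r. Qed.

Lemma linear_functionalB psi u v : linear_functional psi -> psi (u - v) = psi u - psi v.
Proof. by move=> lpsi; rewrite linear_functionalD // linear_functionalN. Qed.

Definition rank_one psi w : V -> V := fun v => psi v *: w.

Lemma is_linear_rank_one psi w : linear_functional psi -> is_linear (rank_one psi w).
Proof. by move=> lpsi a u v; rewrite /rank_one lpsi scalerDl scalerA. Qed.

Definition subspace (W : set V) := W 0 /\ forall a u v, W u -> W v -> W (a *: u + v).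

Section Subspace.
Variables (W : set V) (sW : subspace W).

Lemma subspaceD u v : W u -> W v -> W (u + v).
Proof. by move=> Wu Wv; have := sW.2 1 u v Wu Wv; rewrite scale1r. Qed.

Lemma subspaceZ a u : W u -> W (a *: u).
Proof. by move=> Wu; have := sW.2 a u 0 Wu sW.1; rewrite addr0. Qed.

Lemma subspaceB u v : W u -> W v -> W (u - v).
Proof. by move=> Wu Wv; rewrite -scaleN1r; apply: subspaceD => //; apply: subspaceZ. Qed.

End Subspace.

Lemma in_span_nilE v : in_span [::] v = (v = 0).
Proof.
apply/propext; split=> [[c ->]|->]; first by rewrite big_ord0.
by exists (fun=> 0); rewrite big_ord0.
Qed.

Lemma in_span_consE x s v : in_span (x :: s) v = exists c, in_span s (v - c *: x).
Proof.
apply/propext; split=> [[c ->]|[c0 [c ev]]].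
  exists (c ord0); rewrite big_ord_recl /= addrC addKr.
  by exists (fun i => c (lift ord0 i)).
exists (fun i => if unlift ord0 i is Some j then c j else c0).
rewrite big_ord_recl /= unlift_none.
under eq_bigr => i _ do rewrite liftK.
by rewrite -ev addrC subrK.
Qed.

Lemma subspace_in_span s : subspace (in_span s).
Proof.
elim: s => [|x s [span0 spanL]].
  by split=> [|a u v]; rewrite !in_span_nilE // => -> ->; rewrite scaler0 addr0.
split=> [|a u v]; rewrite !in_span_consE; first by exists 0; rewrite scale0r subr0.
move=> [c Hu] [d Hv]; exists (a * c + d).
by rewrite scalerDl -scalerA opprD addrACA -scalerBr; apply: spanL.
Qed.

Lemma in_span_catl s s' v : in_span s v -> in_span (s ++ s') v.
Proof.
elim: s v => [|x s IHs] v /=; rewrite ?in_span_nilE ?in_span_consE.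
  by move=> ->; apply: (subspace_in_span s').1.
by move=> [c Hv]; exists c; apply: IHs.
Qed.

Lemma in_span_catr s s' v : in_span s' v -> in_span (s ++ s') v.
Proof.
elim: s v => [|x s IHs] v //= Hv; rewrite in_span_consE.
by exists 0; rewrite scale0r subr0; apply: IHs.
Qed.

Lemma in_span_map f s v : is_linear f -> in_span s v -> in_span (map f s) (f v).
Proof.
move=> lf; elim: s v => [|x s IHs] v /=; rewrite ?in_span_nilE ?in_span_consE.
  by move=> ->; rewrite is_linear0.
by move=> [c Hv]; exists c; rewrite -is_linearZ // -is_linearB //; apply: IHs.
Qed.

Local Notation S := (finrank_endo V).

Lemma finrank_endo0 : S ezero.
Proof.
split=> [a u v|]; first by rewrite /ezero scaler0 addr0.
by exists [::] => v; rewrite in_span_nilE.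
Qed.

Lemma finrank_endoD f g : S f -> S g -> S (eadd f g).
Proof.
move=> [lf [s Hs]] [lg [s' Hs']]; split; first exact: is_linear_eadd.
exists (s ++ s') => v; apply: (subspaceD (subspace_in_span _)).
  exact: in_span_catl.
exact: in_span_catr.
Qed.

Lemma finrank_endoN f : S f -> S (eopp f).
Proof.
move=> [lf [s Hs]]; split; first exact: is_linear_eopp.
by exists s => v; rewrite /eopp -scaleN1r; apply: (subspaceZ (subspace_in_span _)).
Qed.

Lemma finrank_endoMr f g : S f -> is_linear g -> S (emul f g).
Proof.
by move=> [lf [s Hs]] lg; split; [exact: is_linear_emul | exists s => v; apply: Hs].
Qed.

Lemma finrank_endoMl f g : is_linear f -> S g -> S (emul f g).
Proof.
move=> lf [lg [s Hs]]; split; first exact: is_linear_emul.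
by exists (map f s) => v; apply: in_span_map.
Qed.

Lemma finrank_endo_rank_one psi w : linear_functional psi -> S (rank_one psi w).
Proof.
move=> lpsi; split; first exact: is_linear_rank_one.
exists [:: w] => v; rewrite in_span_consE; exists (psi v).
by rewrite subrr in_span_nilE.
Qed.

End LinearAlgebra.

Section ScalarPlusFiniteRank.
Variables (k : comPzRingType) (V : lmodType k).
Implicit Types (f g x y : V -> V).
Local Notation S := (finrank_endo V).
Local Notation R := (scalar_plus_finrank V).

Lemma is_linear_escal c : is_linear (@escal k V c).
Proof. by move=> a u v; rewrite /escal scalerDr !scalerA mulrC. Qed.

Lemma scalar_plus_finrankP x :
  R x <-> exists c s, S s /\ x = eadd (escal c) s.
Proof.
split=> [[lx [c Sxc]]|[c [s [[ls fs] ->]]]].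
  exists c, (eadd x (eopp (escal c))); split=> //.
  by apply/funext => v; rewrite /eadd /eopp addrC subrK.
split; first exact/is_linear_eadd/ls/is_linear_escal.
exists c; have -> // : eadd (eadd (escal c) s) (eopp (escal c)) = s.
by apply/funext => v; rewrite /eadd /eopp addrAC subrr add0r.
Qed.

Lemma scalar_plus_finrank_escal c : R (escal c).
Proof.
apply/scalar_plus_finrankP; exists c, ezero; split; first exact: finrank_endo0.
by apply/funext => v; rewrite /eadd /ezero addr0.
Qed.

Lemma scalar_plus_finrank1 : R eone.
Proof.
rewrite (_ : eone = escal 1); first exact: scalar_plus_finrank_escal.
by apply/funext => v; rewrite /escal scale1r.
Qed.

Lemma finrank_scalar_plus f : S f -> R f.
Proof.
move=> Sf; apply/scalar_plus_finrankP; exists 0, f; split=> //.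
by apply/funext => v; rewrite /eadd /escal scale0r add0r.
Qed.

Lemma scalar_plus_finrank0 : R ezero.
Proof. exact/finrank_scalar_plus/finrank_endo0. Qed.

Lemma scalar_plus_finrankD x y : R x -> R y -> R (eadd x y).
Proof.
move=> /scalar_plus_finrankP [c [s [Ss ->]]] /scalar_plus_finrankP [d [t [St ->]]].
apply/scalar_plus_finrankP; exists (c + d), (eadd s t); split; first exact: finrank_endoD.
by apply/funext => v; rewrite /eadd /escal scalerDl addrACA.
Qed.

Lemma scalar_plus_finrankN x : R x -> R (eopp x).
Proof.
move=> /scalar_plus_finrankP [c [s [Ss ->]]].
apply/scalar_plus_finrankP; exists (- c), (eopp s); split; first exact: finrank_endoN.
by apply/funext => v; rewrite /eadd /eopp /escal opprD scaleNr.
Qed.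

Lemma scalar_plus_finrankM x y : R x -> R y -> R (emul x y).
Proof.
move=> /scalar_plus_finrankP [c [s [Ss ->]]] Ry.
have /scalar_plus_finrankP [d [t [St ey]]] := Ry.
apply/scalar_plus_finrankP; exists (c * d), (eadd (emul (escal c) t) (emul s y)).
split.
  apply: finrank_endoD; first exact/finrank_endoMl/St/is_linear_escal.
  by apply: finrank_endoMr Ss _; case: Ry.
by apply/funext => v; rewrite ey /eadd /emul /escal scalerDr scalerA addrA.
Qed.

Lemma is_ideal_zero : is_ideal R zero_ideal.
Proof.
split; first by move=> x ->; exact: scalar_plus_finrank0.
split=> //; split; first by move=> x y -> ->; apply/funext => v; rewrite /eadd addr0.
split; first by move=> x ->; apply/funext => v; rewrite /eopp oppr0.
split=> r x [lr _] -> //.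
by apply/funext => v; rewrite /emul /ezero is_linear0.
Qed.

Lemma is_ideal_scalar_plus_finrank : is_ideal R R.
Proof.
split=> //; split; first exact: scalar_plus_finrank0.
split; first exact: scalar_plus_finrankD.
split; first exact: scalar_plus_finrankN.
by split=> r x Rr Rx; apply: scalar_plus_finrankM.
Qed.

Lemma is_ideal_finrank : is_ideal R S.
Proof.
split; first exact: finrank_scalar_plus.
split; first exact: finrank_endo0.
split; first exact: finrank_endoD.
split; first exact: finrank_endoN.
by split=> r x [lr _] Sx; [exact: finrank_endoMl | exact: finrank_endoMr].
Qed.

End ScalarPlusFiniteRank.

Section Functionals.
Variables (k : fieldType) (V : lmodType k).
Implicit Types (W M : set V) (t u v : V).

Lemma subspace_maximal_avoiding W t : subspace W -> ~ W t ->
  exists M, [/\ W `<=` M, subspace M, ~ M t &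
    forall Y, subspace Y -> M `<=` Y -> ~ Y t -> Y `<=` M].
Proof.
move=> sW Wt; pose Q M := [/\ W `<=` M, subspace M & ~ M t].
(* [set0] is admitted because [Zorn_bigcup] bounds the empty chain by it. *)
have [M [[->|[WM sM Mt]] maxM]] :
    exists M, (M = set0 \/ Q M) /\ forall Y, M `<` Y -> ~ (Y = set0 \/ Q Y).
  apply: Zorn_bigcup => F FQ Ftot.
  have QF X x : F X -> X x -> Q X by move=> /FQ [X0|//]; rewrite X0.
  have [[X0 FX0 X0x]|Fnil] := pselect (exists2 X, F X & exists x, X x); last first.
    by left; rewrite -subset0 => x [X FX Xx]; apply: Fnil; exists X => //; exists x.
  case: X0x => x0 /(QF _ _ FX0) [WX0 sX0 _]; right; split.
  - by move=> w Ww; exists X0 => //; apply: WX0.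
  - split; first by exists X0 => //; case: sX0.
    move=> a u v [X FX Xu] [Y FY Yv].
    have [XY|YX] := Ftot X Y FX FY.
      by exists Y => //; have [_ [_ sY] _] := QF _ _ FY Yv; apply: sY => //; apply: XY.
    by exists X => //; have [_ [_ sX] _] := QF _ _ FX Xu; apply: sX => //; apply: YX.
  - by move=> [X FX Xt]; have [] := QF _ _ FX Xt.
- exfalso; apply: (maxM W); last by right; split.
  split=> [x //|]; rewrite subset0 => W0.
  by have := sW.1; rewrite W0.
- exists M; split=> // Y sY MY Yt; apply: contrapT => YM.
  by apply: (maxM Y); [split | right; split=> // x /WM /MY].
Qed.

Section CoordinateAlongComplement.
Variables (M : set V) (t : V).
Hypotheses (sM : subspace M) (Mt : ~ M t).
Hypothesis maxM : forall Y, subspace Y -> M `<=` Y -> ~ Y t -> Y `<=` M.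

Lemma coord_unique v c d : M (v - c *: t) -> M (v - d *: t) -> c = d.
Proof.
move=> Mc Md; apply: contrapT => /eqP cd; apply: Mt.
have := subspaceZ sM (c - d)^-1 (subspaceB sM Md Mc).
have -> : v - d *: t - (v - c *: t) = (c - d) *: t.
  by rewrite scalerBl opprB addrC addrA subrK.
by rewrite scalerA mulVf ?subr_eq0 // scale1r.
Qed.

Lemma coord_exists v : exists c, M (v - c *: t).
Proof.
have [Mv|Mv] := pselect (M v); first by exists 0; rewrite scale0r subr0.
pose Y u := exists m a, M m /\ u = m + a *: v.
have [[m [a [Mm tE]]]|Yt] := pselect (Y t); last first.
  have YM : Y `<=` M.
    apply: maxM => // [|u Mu]; last by exists u, 0; rewrite scale0r addr0.
    split; first by exists 0, 0; rewrite scale0r addr0; split=> //; apply: sM.1.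
    move=> b _ _ [m1 [a1 [M1 ->]]] [m2 [a2 [M2 ->]]].
    exists (b *: m1 + m2), (b * a1 + a2); split; first exact: sM.2.
    by rewrite scalerDr scalerA scalerDl addrACA.
  by case: Mv; apply: YM; exists 0, 1; rewrite scale1r add0r; split=> //; apply: sM.1.
have a0 : a != 0 by apply: contraPneq Mt => a0; rewrite tE a0 scale0r addr0.
exists a^-1; suff -> : v - a^-1 *: t = - a^-1 *: m by apply: subspaceZ.
by rewrite tE scalerDr scalerA mulVf // scale1r opprD addrCA subrr addr0 scaleNr.
Qed.

End CoordinateAlongComplement.

Lemma linear_functional_separating W t : subspace W -> ~ W t ->
  exists psi : V -> k,
    [/\ linear_functional psi, psi t = 1 & forall w, W w -> psi w = 0].
Proof.
move=> sW Wt; have [M [WM sM Mt maxM]] := subspace_maximal_avoiding sW Wt.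
pose psi v := projT1 (cid (coord_exists sM Mt maxM v)).
have psiP v : M (v - psi v *: t) := projT2 (cid (coord_exists sM Mt maxM v)).
exists psi; split.
- move=> a u v; apply: (coord_unique sM Mt (psiP _)).
  rewrite scalerDl -scalerA opprD addrACA -scalerBr.
  by apply: sM.2; apply: psiP.
- by apply: (coord_unique sM Mt (psiP _)); rewrite scale1r subrr; apply: sM.1.
- move=> w Ww; apply: (coord_unique sM Mt (psiP _)).
  by rewrite scale0r subr0; apply: WM.
Qed.

Lemma linear_functional_exists t : t != 0 ->
  exists psi : V -> k, linear_functional psi /\ psi t = 1.
Proof.
move=> t0; have s0 : subspace [set 0 : V].
  by split=> // a u v -> ->; rewrite scaler0 addr0.
have [|psi [lpsi psit _]] := linear_functional_separating s0 (t := t); last by exists psi.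
by move=> /eqP; apply/negP.
Qed.

End Functionals.

Lemma exists_nonzero_image (V : zmodType) (f : V -> V) :
  f <> ezero -> exists v, f v != 0.
Proof.
move=> f0; apply: contra_notP f0 => /forallNP f0; apply/funext => v.
by apply/eqP/negbNE/negP/f0.
Qed.

Section Ideals.
Variables (k : fieldType) (V : lmodType k).
Implicit Types (f g x y : V -> V) (A I : set (V -> V)).
Local Notation S := (finrank_endo V).
Local Notation R := (scalar_plus_finrank V).

Lemma rank_one_in_ideal I x psi w : is_ideal R I -> I x -> x <> ezero ->
  linear_functional psi -> I (rank_one psi w).
Proof.
move=> [IR [_ [_ [_ [IMl IMr]]]]] Ix /exists_nonzero_image [v0 xv0] lpsi.
have [phi [lphi phixv0]] := linear_functional_exists xv0.
have [lx _] := IR _ Ix.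
have -> : rank_one psi w = emul (rank_one phi w) (emul x (rank_one psi v0)).
  apply/funext => v; rewrite /emul /rank_one is_linearZ //.
  by rewrite linear_functionalZ // phixv0 mulr1.
apply: IMl; first exact/finrank_scalar_plus/finrank_endo_rank_one.
by apply: IMr => //; apply/finrank_scalar_plus/finrank_endo_rank_one.
Qed.

(* Induction on a spanning list [y :: s] of the range: if [y] is not in the
   span of [s], a functional [psi] with [psi y = 1] killing [s] splits [f] as
   [rank_one (psi \o f) y] plus a map with range in the span of [s]. *)
Lemma finrank_endo_ind A : A ezero -> (forall f g, A f -> A g -> A (eadd f g)) ->
  (forall psi w, linear_functional psi -> A (rank_one psi w)) -> S `<=` A.
Proof.
move=> A0 AD A1 f [+ [s]]; elim: s f => [|y s IHs] f lf fs.
  suff -> : f = ezero by [].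
  by apply/funext => v; have := fs v; rewrite in_span_nilE.
have [ys|ys] := pselect (in_span s y).
  apply: IHs lf _ => v; have := fs v; rewrite in_span_consE => -[c fvc].
  rewrite -(subrK (c *: y) (f v)); apply: (subspaceD (subspace_in_span s)) => //.
  exact: (subspaceZ (subspace_in_span s)).
have [psi [lpsi psiy psis]] := linear_functional_separating (subspace_in_span s) ys.
have lpsif : linear_functional (fun v => psi (f v)) by move=> a u v; rewrite lf lpsi.
pose g := eadd f (eopp (rank_one (fun v => psi (f v)) y)).
have -> : f = eadd (rank_one (fun v => psi (f v)) y) g.
  by apply/funext => v; rewrite /g /eadd /eopp addrC subrK.
apply: AD; first exact: A1.
apply: IHs => [|v]; first by apply/is_linear_eadd/is_linear_eopp/is_linear_rank_one.
have := fs v; rewrite in_span_consE /g /eadd /eopp /rank_one => -[c fvc].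
suff <- : c = psi (f v) by [].
have := psis _ fvc.
by rewrite linear_functionalB // linear_functionalZ // psiy mulr1 => /subr0_eq.
Qed.

Lemma rideal_mod_finrank_cases A : is_rideal_mod R S A -> A = S \/ A = R.
Proof.
move=> [AR SA AD AN AM]; have [AS|] := pselect (A `<=` S).
  by left; apply/seteqP; split.
move=> /existsNP [x /not_implyP [Ax Sx]]; right; apply/seteqP; split=> // r Rr.
have /scalar_plus_finrankP [c [s [Ss xE]]] := AR _ Ax.
have c0 : c != 0.
  apply: contra_notN Sx => /eqP c0; rewrite xE c0.
  by rewrite (_ : eadd _ s = s) //; apply/funext => v; rewrite /eadd /escal scale0r add0r.
have A1 : A eone.
  have := AM _ _ (AD _ _ Ax (AN _ (SA _ Ss))) (scalar_plus_finrank_escal _ c^-1).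
  rewrite (_ : emul _ _ = eone) //; apply/funext => v.
  by rewrite xE /emul /eadd /eopp /escal addrK scalerA mulfV // scale1r.
by have := AM _ _ A1 Rr.
Qed.

Lemma is_ideal_classification I : is_ideal R I -> [\/ I = zero_ideal, I = S | I = R].
Proof.
move=> II; have [[x Ix x0]|none] := pselect (exists2 x, I x & x <> ezero); last first.
  constructor 1; apply/seteqP; split=> [x Ix|x ->]; last exact: II.2.1.
  by apply: contrapT => x0; apply: none; exists x.
have SI : S `<=` I.
  have [_ [I0 [ID _]]] := II.
  by apply: finrank_endo_ind => // psi w lpsi; apply: rank_one_in_ideal Ix x0 lpsi.
have [IR [_ [ID [IN [_ IMr]]]]] := II.
have /rideal_mod_finrank_cases [->|->] : is_rideal_mod R S I.
  by split=> // a r Ia Rr; apply: IMr.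
- by constructor 2.
- by constructor 3.
Qed.

End Ideals.

Section JacobsonRadical.
Variables (k : fieldType) (V : lmodType k).
Local Notation R := (scalar_plus_finrank V).

Lemma maximal_rideal_kernel (psi : V -> k) t : linear_functional psi -> psi t = 1 ->
  maximal_rideal_mod R zero_ideal (fun r => R r /\ forall u, psi (r u) = 0).
Proof.
move=> lpsi psit; split.
- split=> [r [] //|r ->|a b [Ra Ha] [Rb Hb]|a [Ra Ha]|a r [Ra Ha] Rr].
  + split=> [|u]; first exact: scalar_plus_finrank0.
    exact: linear_functional0.
  + split=> [|u]; first exact: scalar_plus_finrankD.
    by rewrite linear_functionalD // Ha Hb addr0.
  + split=> [|u]; first exact: scalar_plus_finrankN.
    by rewrite linear_functionalN // Ha oppr0.
  + by split=> [|u]; [exact: scalar_plus_finrankM | apply: Ha].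
- by move=> [_ /(_ t)]; rewrite /eone psit => /eqP; rewrite oner_eq0.
(* If [y] in [N] has [psi (y u) = a != 0], then [y z] with
   [z := rank_one psi (a^-1 *: u)] agrees with [1] modulo the kernel. *)
move=> N [NR _ ND _ NM] MN N1 y Ny; apply: contrapT => My.
have Ry := NR _ Ny.
have [u yu] : exists u, psi (y u) != 0.
  apply: contrapT => /forallNP yu0; apply: My; split=> // u.
  exact/eqP/negbNE/negP/yu0.
pose z := rank_one psi ((psi (y u))^-1 *: u).
have Rz : R z by apply/finrank_scalar_plus/finrank_endo_rank_one.
have Nc : N (eadd eone (eopp (emul y z))).
  apply: MN; split.
    apply: scalar_plus_finrankD; first exact: scalar_plus_finrank1.
    by apply: scalar_plus_finrankN; apply: scalar_plus_finrankM.
  move=> w; rewrite /eadd /eone /eopp /emul /z /rank_one linear_functionalB //.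
  have [ly _] := Ry.
  rewrite is_linearZ // is_linearZ //.
  by rewrite linear_functionalZ // linear_functionalZ // mulVf // mulr1 subrr.
apply: N1; have := ND _ _ (NM _ _ Ny Rz) Nc.
by rewrite (_ : eadd _ _ = eone) //; apply/funext => w; rewrite /eadd addrC subrK.
Qed.

Lemma Jac_scalar_plus_finrank : Jac R = zero_ideal.
Proof.
apply/seteqP; split=> [x [_ Jx]|x ->]; last first.
  by split=> [|M [[_ M0 _ _ _] _ _]]; [exact: scalar_plus_finrank0 | exact: M0].
apply: contrapT => /exists_nonzero_image [v xv].
have [psi [lpsi psixv]] := linear_functional_exists xv.
have [_ /(_ v)] := Jx _ (maximal_rideal_kernel lpsi psixv).
by rewrite psixv => /eqP; rewrite oner_eq0.
Qed.

End JacobsonRadical.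

Section InfiniteDimensional.
Variables (k : fieldType) (V : lmodType k).
Hypothesis Vinf : infinite_dim V.
Local Notation S := (finrank_endo V).
Local Notation R := (scalar_plus_finrank V).

Lemma exists_nonzero_vector : exists v : V, v != 0.
Proof.
have [v v0] := Vinf [::]; exists v; apply: contra_notN v0 => /eqP ->.
by rewrite in_span_nilE.
Qed.

Lemma finrank_endo_eone : ~ S eone.
Proof. by move=> [_ [s Hs]]; have [v] := Vinf s; apply; apply: Hs. Qed.

Lemma prime_ring_scalar_plus_finrank : prime_ring R.
Proof.
split.
  have [v /eqP v0] := exists_nonzero_vector.
  by move=> /(congr1 (fun f => f v)); exact: v0.
move=> a b Ra Rb aRb; apply: contrapT => /not_orP [/exists_nonzero_image [u au]].
move=> /exists_nonzero_image [v bv].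
have [psi [lpsi psibv]] := linear_functional_exists bv.
have Rr := finrank_scalar_plus (finrank_endo_rank_one u lpsi).
have := congr1 (fun f => f v) (aRb _ Rr).
by rewrite /emul /rank_one /ezero /= psibv scale1r => au0; rewrite au0 eqxx in au.
Qed.

Lemma maximal_rideal_mod_finrank_cases : maximal_rideal_mod R S S.
Proof.
have [IR [_ [ID [IN [_ IMr]]]]] := is_ideal_finrank V.
split; [by split=> // a r Sa Rr; apply: IMr | exact: finrank_endo_eone |].
by move=> N /rideal_mod_finrank_cases [->|->] // _ []; apply: scalar_plus_finrank1.
Qed.

Lemma Jac_mod_finrank : Jac_mod R S = S.
Proof.
apply/seteqP; split=> [x [_ Jx]|x Sx]; first exact: Jx maximal_rideal_mod_finrank_cases.
by split=> [|M [[_ SM _ _ _] _ _]]; [exact: finrank_scalar_plus | exact: SM].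
Qed.

Lemma semilocal_mod_finrank : semilocal_mod R S.
Proof.
have RR := is_rideal_mod_ideal (is_ideal_scalar_plus_finrank V)
  (@finrank_scalar_plus _ V).
have RS := is_rideal_mod_ideal (is_ideal_finrank V) (@subset_refl _ S).
rewrite /semilocal_mod Jac_mod_finrank; split.
- move=> A /rideal_mod_finrank_cases [->|->].
  + exists R; split=> // x Rx; exists ezero, x; split=> //; first exact: finrank_endo0.
    by apply/funext => v; rewrite /eadd /ezero add0r.
  + exists S; split=> // x Rx; exists x, ezero; split=> //; first exact: finrank_endo0.
    by apply/funext => v; rewrite /eadd /ezero addr0.
- move=> A AR _; have [[N AN]|AS] := pselect (exists N, A N = S).
    by exists N => n _ x; rewrite AN; have [_ SA _ _ _] := AR n; apply: SA.
  exists 0%N => n _ x A0x.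
  have [AnS|->] := rideal_mod_finrank_cases (AR n); first by case: AS; exists n.
  by have [AR0 _ _ _ _] := AR 0%N; apply: AR0.
Qed.

Lemma rperfect_mod_finrank : rperfect_mod R S.
Proof.
split; first exact: semilocal_mod_finrank.
by rewrite /rTnilpotent_mod Jac_mod_finrank => a Sa; exists 0%N; apply: Sa.
Qed.

Lemma lperfect_mod_finrank : lperfect_mod R S.
Proof.
split; first exact: semilocal_mod_finrank.
by rewrite /lTnilpotent_mod Jac_mod_finrank => a Sa; exists 0%N; apply: Sa.
Qed.

Lemma not_semilocal_scalar_plus_finrank : ~ semilocal R.
Proof.
move=> [semisimpleR _]; have {semisimpleR} : semisimple_mod R zero_ideal.
  by rewrite -Jac_scalar_plus_finrank.
have zS : zero_ideal `<=` S by move=> x ->; exact: finrank_endo0.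
move=> /(_ _ (is_rideal_mod_ideal (is_ideal_finrank V) zS)) [B [[_ _ _ _ BM] dec BS0]].
have [a [b [Sa Bb oneE]]] := dec _ (scalar_plus_finrank1 V).
have [la [l al]] := Sa.
have bE v : b v = v - a v.
  have vE : v = a v + b v := congr1 (fun f => f v) oneE.
  by rewrite {2}vE addrAC subrr add0r.
have [w lw] := Vinf l; have [t t0] := exists_nonzero_vector.
have [psi [lpsi psit]] := linear_functional_exists t0.
have Ss := finrank_endo_rank_one w lpsi.
have Sbs : S (emul b (rank_one psi w)).
  rewrite (_ : emul _ _ = eadd (rank_one psi w) (eopp (emul a (rank_one psi w)))).
    exact/finrank_endoD/finrank_endoN/finrank_endoMl.
  by apply/funext => v; rewrite /emul /eadd /eopp bE.
have /(congr1 (fun f => f t)) := BS0 _ Sbs (BM _ _ Bb (finrank_scalar_plus Ss)).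
rewrite /emul /rank_one /ezero /= psit scale1r bE => /subr0_eq wE.
by apply: lw; rewrite wE; apply: al.
Qed.

End InfiniteDimensional.

Unset Implicit Arguments. Set Strict Implicit.

Theorem mainTheorem11 (k : fieldType) (V : lmodType k) (Hinf : infinite_dim V) :
  let S := finrank_endo V in
  let R := scalar_plus_finrank V in
  [/\ (forall I, is_ideal R I <->
         [\/ (forall x, I x <-> x = ezero),
             (forall x, I x <-> S x) |
             (forall x, I x <-> R x)]),
      prime_ring R,
      ralmost_perfect R /\ lalmost_perfect R,
      (forall x, Jac R x <-> x = ezero) &
      [/\ ~ semilocal R, ~ rperfect R & ~ lperfect R]].
Proof.
move=> S R; have setE (I J : set (V -> V)) : (forall x, I x <-> J x) -> I = J.
  by move=> IJ; apply/funext => x; apply/propext.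
have nsl := not_semilocal_scalar_plus_finrank Hinf.
split.
- move=> I; split=> [/is_ideal_classification [] ->|].
  + by constructor 1.
  + by constructor 2.
  + by constructor 3.
  by case=> /setE ->;
    [exact: is_ideal_zero | exact: is_ideal_finrank | exact: is_ideal_scalar_plus_finrank].
- exact: prime_ring_scalar_plus_finrank.
- have finrank_of I :
      is_ideal R I -> ~ (forall x, I x <-> x = ezero) -> ~ (R `<=` I) -> I = S.
    move=> /is_ideal_classification [->|->|->] // I0 IR; first by case: I0.
    by case: IR.
  by split=> I II I0 IR; rewrite (finrank_of I II I0 IR);
    [exact: rperfect_mod_finrank | exact: lperfect_mod_finrank].
- by rewrite Jac_scalar_plus_finrank.
- by split=> // -[].
Qed.
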